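(* Let $A$ be a finite set and let $\le_E$ be the ordering on $A^*$ defined below. Then: (1) $(A^*, \le_E)$ has no descending chain and no antichain. (2) $(U(A^*, \le_E), \subseteq)$ has no ascending chain and no antichain.
   Context: $A^* = \bigcup_{n \in \mathbb{N}_0} A^n$ is the set of finite words over $A$. The embedding order $\le_e$ on words over an alphabet is defined by recursion on the length of $x$: the empty word satisfies $\emptyset \le_e y$ for all $y$; if $x = au$ with $a$ a letter and $u$ a word, then $x \le_e y$ iff there are words $v,w$ with $y = vaw$ and $u \le_e w$ (i.e. $x$ is obtained from $y$ by deleting letters). Let $B := (A\times\{0\}) \cup (A \times \{1\})$ and define $\varphi: A^* \to B^*$ by $\varphi(a_1,\dots,a_n) := (b_1,\dots,b_n)$ where $b_i := (a_i,0)$ if $a_i \notin \{a_1,\dots,a_{i-1}\}$ and $b_i := (a_i,1)$ otherwise. For $u = (a_1,\dots,a_n)$ let $S(u) := \{a_1,\dots,a_n\}$. For $u,v \in A^*$, $u \le_E v$ iff $\varphi(u) \le_e \varphi(v)$ and $S(u) = S(v)$. For a partially ordered set $(P,\le)$: a sequence $(a_i)_{i\in\mathbb{N}_0}$ is a descending chain if $a_i > a_{i+1}$ for all $i$, an ascending chain if $a_i < a_{i+1}$ for all $i$, and an antichain if $a_i \le a_j$ implies $i=j$. A subset $U \subseteq P$ is upward closed if $u\in U$, $u \le a$ imply $a \in U$; $U(P,\le)$ denotes the set of upward closed subsets of $P$, ordered by inclusion. *)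

From mathcomp Require Import all_boot.
Set Implicit Arguments. Unset Strict Implicit. Unset Printing Implicit Defensive.

Fixpoint emb (X : eqType) (x y : seq X) : Prop :=
  match x with
  | [::] => True
  | a :: u => exists v w, y = v ++ a :: w /\ emb u w
  end.

(* B = A x {0,1}; we encode 0 as false and 1 as true. *)
Fixpoint phi_aux (A : eqType) (seen : seq A) (s : seq A) : seq (A * bool) :=
  match s with
  | [::] => [::]
  | a :: t => (a, a \in seen) :: phi_aux (a :: seen) t
  end.

Definition phi (A : eqType) (s : seq A) : seq (A * bool) := phi_aux [::] s.

Definition S (A : finType) (u : seq A) : {set A} := [set a in u].

Definition leE (A : finType) (u v : seq A) : Prop := emb (phi u) (phi v) /\ S u = S v.

Definition descending_chain (P : Type) (le : P -> P -> Prop) (a : nat -> P) : Prop :=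
  forall i, le (a i.+1) (a i) /\ a i.+1 <> a i.
Definition ascending_chain (P : Type) (le : P -> P -> Prop) (a : nat -> P) : Prop :=
  forall i, le (a i) (a i.+1) /\ a i <> a i.+1.
Definition antichain (P : Type) (le : P -> P -> Prop) (a : nat -> P) : Prop :=
  forall i j, le (a i) (a j) -> i = j.

Definition upward_closed (P : Type) (le : P -> P -> Prop) (U : P -> Prop) : Prop :=
  forall u a, U u -> le u a -> U a.

Definition upsets (P : Type) (le : P -> P -> Prop) := {U : P -> Prop | upward_closed le U}.
Definition incl (P : Type) (le : P -> P -> Prop) (X Y : upsets le) : Prop :=
  forall x, proj1_sig X x -> proj1_sig Y x.

(* Higman's lemma, proved by a Nash-Williams minimal bad sequence argument, makes the subword
   order on words over a finite alphabet almost full.  Tagging phi(u) with S(u) turns <=_E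
   into a restriction of the subword order, which gives (1).  For (2), every downward closed
   set of words is a finite union of products of atoms G^* and (b + eps).  So the complement
   of an upset is coded by finitely many pairs (X, product) describing the words phi(u) with
   S(u) = X outside it, and Higman's lemma applied to lists of such codes shows that in every
   sequence of upsets some later one is contained in an earlier one. *)

From mathcomp Require Import all_boot.
From Stdlib Require Import Classical.
From Stdlib Require ClassicalEpsilon ProofIrrelevance FunctionalExtensionality PropExtensionality.
Set Implicit Arguments. Unset Strict Implicit. Unset Printing Implicit Defensive.

Definition almost_full (X : Type) (Q : X -> X -> Prop) :=
  forall f : nat -> X, exists i j, i < j /\ Q (f i) (f j).

Definition bad (X : Type) (Q : X -> X -> Prop) (f : nat -> X) :=
  forall i j, i < j -> ~ Q (f i) (f j).

Lemma almost_full_comap (X Y : Type) (Q : X -> X -> Prop) (g : Y -> X) :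
  almost_full Q -> almost_full (fun x y => Q (g x) (g y)).
Proof. by move=> afQ f; apply: afQ (fun n => g (f n)). Qed.

Lemma almost_full_eq (T : finType) : almost_full (@eq T).
Proof.
move=> f; apply: NNPP => not_good.
have f_inj : injective (fun i : 'I_#|T|.+1 => f i).
  move=> i j /= eq_f; apply: val_inj.
  by case: (ltngtP i j) => // lt; case: not_good; [exists i, j | exists j, i].
by have := leq_card _ f_inj; rewrite card_ord ltnn.
Qed.

Lemma almost_full_no_strict_descent (X : Type) (Q : X -> X -> Prop) (D : nat -> X -> Prop) :
  almost_full Q -> (forall n x y, Q x y -> D n y -> D n x) ->
  (forall n x, D n.+1 x -> D n x) -> ~ (forall n, exists x, D n x /\ ~ D n.+1 x).
Proof.
move=> afQ downD decrD /ClassicalEpsilon.choice [w Hw].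
have [i [j [lt_ij Qij]]] := afQ w.
have sub_ij : forall x, D j x -> D i.+1 x :=
  homo_leq (r := fun E F : X -> Prop => forall x, F x -> E x)
    (fun E x => id) (fun F E G EF FG x Gx => EF x (FG x Gx)) decrD lt_ij.
exact: (proj2 (Hw i)) (downD _ _ _ Qij (sub_ij _ (proj1 (Hw j)))).
Qed.

Lemma ex_minimal (X : Type) (P : X -> Prop) (mu : X -> nat) :
  (exists x, P x) -> exists x, P x /\ forall y, P y -> mu x <= mu y.
Proof.
move=> [x0 Px0].
suff ex_lt n x : mu x < n -> P x -> exists x, P x /\ forall y, P y -> mu x <= mu y.
  exact: ex_lt (ltnSn _) Px0.
elim: n x => // n IH x; rewrite ltnS => le_xn Px.
have [[y [Py lt_yx]]|no_smaller] := classic (exists y, P y /\ mu y < mu x).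
  exact: IH (leq_trans lt_yx le_xn) Py.
exists x; split=> // y Py; rewrite leqNgt; apply/negP=> lt_yx.
by apply: no_smaller; exists y.
Qed.

(* Nash-Williams: the n-th term is chosen of minimal measure among all bad continuations
   of the first n terms. *)
Lemma ex_minimal_bad (X : Type) (Q : X -> X -> Prop) (mu : X -> nat) :
  (exists f, bad Q f) -> exists2 m, bad Q m &
  forall n g, bad Q g -> (forall i, i < n -> g i = m i) -> mu (m n) <= mu (g n).
Proof.
move=> [f bad_f].
pose spec n (g h : nat -> X) := [/\ bad Q h, forall i, i < n -> h i = g i &
  forall h', bad Q h' -> (forall i, i < n -> h' i = g i) -> mu (h n) <= mu (h' n)].
have spec_eps n g : bad Q g -> spec n g (ClassicalEpsilon.epsilon (inhabits g) (spec n g)).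
  move=> bad_g; apply: ClassicalEpsilon.epsilon_spec.
  have [|h [[bad_h agree_h] min_h]] := ex_minimal (fun h => mu (h n)) (P := fun h =>
    bad Q h /\ forall i, i < n -> h i = g i); first by exists g.
  by exists h; split=> // h' bad_h' agree_h'; apply: min_h.
pose prev (gs : nat -> nat -> X) n := if n is n'.+1 then gs n' else f.
pose fix gs n := ClassicalEpsilon.epsilon (inhabits (prev gs n)) (spec n (prev gs n)).
have spec_gs n : spec n (prev gs n) (gs n).
  by elim: n => [|n [bad_n _ _]]; apply: spec_eps.
have gs_stable n i : i <= n -> gs n i = gs i i.
  elim: n => [|n IH]; first by rewrite leqn0 => /eqP ->.
  rewrite leq_eqVlt => /predU1P [-> //|lt_in].
  by have [_ agree _] := spec_gs n.+1; rewrite agree //= IH.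
exists (fun n => gs n n).
  move=> i j lt_ij; rewrite -(gs_stable j i (ltnW lt_ij)).
  by have [bad_j _ _] := spec_gs j; apply: bad_j.
move=> n g bad_g agree_g; have [_ _] := spec_gs n; apply=> // i lt_in.
by case: n lt_in agree_g => // n lt_in agree_g; rewrite agree_g //= (gs_stable n i).
Qed.

Section Chains.
Variables (X : Type) (Q : X -> X -> Prop).
Hypothesis afQ : almost_full Q.

Lemma almost_full_eventually_succ (f : nat -> X) :
  exists N, forall i, N <= i -> exists2 j, i < j & Q (f i) (f j).
Proof.
apply: NNPP => no_N.
have /ClassicalEpsilon.choice [t Ht] :
    forall N, exists i, N <= i /\ forall j, i < j -> ~ Q (f i) (f j).
  move=> N; apply: NNPP => no_i; apply: no_N; exists N => i le_Ni.
  apply: NNPP => no_j; apply: no_i; exists i; split=> // j lt_ij Qij.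
  by apply: no_j; exists j.
pose idx k := iter k (fun i => t i.+1) (t 0).
have idx_maximal k j : idx k < j -> ~ Q (f (idx k)) (f j) by case: k => [|k]; apply: (proj2 (Ht _)).
have idx_incr : {homo idx : k l / k < l} by apply: homo_ltn ltn_trans _ => k; apply: (proj1 (Ht _)).
have [k [l [lt_kl Qkl]]] := afQ (fun k => f (idx k)).
exact: idx_maximal (idx_incr _ _ lt_kl) Qkl.
Qed.

Hypothesis Q_trans : forall y x z, Q x y -> Q y z -> Q x z.

Lemma almost_full_chain (f : nat -> X) :
  exists c : nat -> nat, forall k l, k < l -> c k < c l /\ Q (f (c k)) (f (c l)).
Proof.
have [N HN] := almost_full_eventually_succ f.
have /ClassicalEpsilon.choice [nx Hnx] : forall i, exists j, i < j /\ (N <= i -> Q (f i) (f j)).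
  move=> i; case: (leqP N i) => [/HN [j lt_ij Qij]|lt_iN]; first by exists j.
  by exists i.+1; split=> // /(leq_trans lt_iN); rewrite ltnn.
pose c k := iter k nx N.
have N_c k : N <= c k by elim: k => //= k IH; apply: leq_trans IH (ltnW (proj1 (Hnx _))).
exists c; apply: (homo_ltn (r := fun i j => i < j /\ Q (f i) (f j))) => [y x z [? ?] [? ?]|k].
  by split; [apply: ltn_trans | apply: Q_trans]; eassumption.
exact: (conj (proj1 (Hnx _)) (proj2 (Hnx _) (N_c k))).
Qed.

End Chains.

Section Embedding.
Variables (T : Type) (R : T -> T -> Prop).

Fixpoint embed (s t : seq T) : Prop :=
  match t with
  | [::] => s = [::]
  | b :: t' => embed s t' \/ (if s is a :: s' then R a b /\ embed s' t' else True)
  end.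

Lemma embed0s t : embed [::] t.
Proof. by case: t => [|b t] //=; right. Qed.

Hypotheses (R_trans : forall y x z, R x y -> R y z -> R x z) (afR : almost_full R).

(* A minimal bad sequence m has nonempty terms; extracting an R-chain c from their heads
   and replacing m (c k) by its tail from index c 0 on gives a bad sequence that is
   smaller at c 0. *)
Theorem higman : almost_full embed.
Proof.
move=> f; apply: NNPP => not_good.
have [|m bad_m min_m] := ex_minimal_bad (Q := embed) size.
  by exists f => i j lt_ij emb_ij; apply: not_good; exists i, j.
have /ClassicalEpsilon.choice [ht m_ht] : forall n, exists p : T * seq T, m n = p.1 :: p.2.
  move=> n; case E: (m n) => [|a t]; last by exists (a, t).
  by case: (bad_m n n.+1 (ltnSn n)); rewrite E; apply: embed0s.
have [c c_chain] := almost_full_chain afR R_trans (fun n => (ht n).1).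
have c0_le k : c 0 <= c k by case: k => // k; apply: ltnW; case: (c_chain 0 k.+1).
pose q i := if i < c 0 then m i else (ht (c (i - c 0))).2.
have bad_q : bad embed q.
  move=> i j lt_ij; rewrite /q.
  case: (ltnP i (c 0)) => [lt_i|le_i]; case: (ltnP j (c 0)) => [lt_j|le_j].
  - exact: bad_m.
  - move=> emb_ij; apply: (bad_m i (c (j - c 0))); first exact: leq_trans lt_i (c0_le _).
    by rewrite (m_ht (c _)) /=; left.
  - by have := leq_ltn_trans le_i (ltn_trans lt_ij lt_j); rewrite ltnn.
  - have lt_ij' : i - c 0 < j - c 0 by rewrite ltn_sub2rE.
    have [lt_c R_heads] := c_chain _ _ lt_ij'.
    by move=> emb_tails; apply: (bad_m _ _ lt_c); rewrite !m_ht /=; right.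
have agree_q i : i < c 0 -> q i = m i by move=> lt_i; rewrite /q lt_i.
by have := min_m (c 0) q bad_q agree_q; rewrite /q ltnn subnn (m_ht (c 0)) /= ltnn.
Qed.

End Embedding.

Lemma embed_mem (T : eqType) (R : T -> T -> Prop) (s t : seq T) :
  embed R s t -> forall x, x \in s -> exists2 y, y \in t & R x y.
Proof.
elim: t s => [|b t IH] s /=; first by move=> -> x.
case=> [/IH emb_st x /emb_st [y y_t Rxy]|]; first by exists y; rewrite // inE y_t orbT.
case: s => [|a s] // [Rab /IH emb_st] x; rewrite inE => /predU1P [->|/emb_st [y y_t Rxy]].
  by exists b => //; apply: mem_head.
by exists y; rewrite // inE y_t orbT.
Qed.

Lemma embed_eqP (T : eqType) (s t : seq T) : reflect (embed eq s t) (subseq s t).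
Proof.
apply: (iffP idP).
  elim: t s => [|b t IH] [|a s] //=; first by right.
  by case: eqP => [<- /IH|_ /IH]; [right | left].
elim: t s => [|b t IH] s /=; first by move->.
case=> [/IH sub|]; first exact: subseq_trans sub (subseq_cons t b).
by case: s => [_|a s [<- /IH sub]]; rewrite ?sub0seq //= eqxx.
Qed.

Lemma almost_full_subseq (T : finType) : almost_full (fun s t : seq T => subseq s t).
Proof.
move=> f; have [i [j [lt_ij /embed_eqP sub_ij]]] :=
  higman (fun y x z (exy : x = y) eyz => etrans exy eyz) (@almost_full_eq T) f.
by exists i, j.
Qed.

Lemma subseq_map_inj (T U : eqType) (f : T -> U) (s t : seq T) :
  injective f -> subseq (map f s) (map f t) -> subseq s t.
Proof.
move=> f_inj /subseqP [m _]; rewrite -map_mask => /(inj_map f_inj) ->.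
exact: mask_subseq.
Qed.

Lemma subseq_tagged (X Y : eqType) (x x' : X) (s s' : seq Y) :
  subseq (inl x :: map inr s) (inl x' :: map inr s') -> x = x' /\ subseq s s'.
Proof.
rewrite /=; case: eqP => [[->] /subseq_map_inj sub|_ /mem_subseq/(_ (inl x))].
  by split=> //; apply: sub => y z [].
by rewrite mem_head => /(_ isT) /mapP [].
Qed.

Lemma embP (X : eqType) (x y : seq X) : reflect (emb x y) (subseq x y).
Proof.
apply: (iffP idP).
  elim: y x => [|b y IH] [|a x] //=.
  case: eqP => [-> /IH emb_xy|_ /IH [v [w [-> emb_xw]]]]; first by exists [::], y.
  by exists (b :: v), w.
elim: x y => [|a x IH] y /=; first by rewrite sub0seq.
case=> v [w [-> /IH sub]]; apply: subseq_trans (suffix_subseq v (a :: w)).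
by rewrite /= eqxx.
Qed.

Lemma phi_auxK (X : eqType) (seen : seq X) : cancel (phi_aux seen) (map fst).
Proof. by move=> s; elim: s seen => //= a s IH seen; rewrite IH. Qed.

Lemma phi_inj (X : eqType) : injective (@phi X).
Proof. exact: can_inj (phi_auxK [::]). Qed.

Section WordOrder.
Variable A : finType.

Lemma leE_refl (u : seq A) : leE u u.
Proof. by split=> //; apply/embP. Qed.

Lemma leE_trans (v u w : seq A) : leE u v -> leE v w -> leE u w.
Proof.
move=> [/embP uv Suv] [/embP vw Svw]; split; last by rewrite Suv.
exact/embP/(subseq_trans uv vw).
Qed.

Lemma leE_antisym (u v : seq A) : leE u v -> leE v u -> u = v.
Proof. by move=> [/embP uv _] [/embP vu _]; apply/phi_inj/subseq_anti/andP. Qed.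

Lemma almost_full_leE : almost_full (@leE A).
Proof.
move=> f; pose code (u : seq A) : seq ({set A} + (A * bool)) := inl (S u) :: map inr (phi u).
have [i [j [lt_ij /subseq_tagged [eS sub]]]] := almost_full_comap code (@almost_full_subseq _) f.
by exists i, j; split=> //; split=> //; apply/embP.
Qed.

End WordOrder.

Lemma ex_finset (T : finType) (P : T -> Prop) : exists G : {set T}, forall x, P x <-> x \in G.
Proof.
have /fin_all_exists [b Hb] : forall x, exists b : bool, P x <-> b.
  by move=> x; case: (classic (P x)) => Px; [exists true | exists false].
by exists [set x | b x] => x; rewrite inE.
Qed.

Section SimpleRegularExpressions.
Variable B : finType.

(* An atom is either G^* for a set of letters G, or (b + eps) for a letter b; a product
   of atoms is a sequence of atoms, denoting the concatenation of their languages. *)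
Definition atom := ({set B} + B)%type.

Definition in_atom (e : atom) (w : seq B) : bool :=
  match e with inl G => all (mem G) w | inr b => subseq w [:: b] end.

Fixpoint lang (p : seq atom) (w : seq B) : Prop :=
  if p is e :: p' then exists u v, [/\ w = u ++ v, in_atom e u & lang p' v] else w = [::].

Lemma lang_nil p : lang p [::].
Proof. by elim: p => //= e p IH; exists [::], [::]; case: e. Qed.

Lemma lang_subseq p q w : subseq p q -> lang p w -> lang q w.
Proof.
elim: q p w => [|e q IH] [|a p] w //=; first by move=> _ ->; apply: (lang_nil (e :: q)).
case: ifP => [/eqP -> sub [u [v [-> e_u /(IH _ _ sub) Lv]]]|_ /IH sub /sub Lw].
  by exists u, v.
by exists [::], w; split=> //; case: e.
Qed.

Definition downset (D : seq B -> Prop) := forall x y, subseq x y -> D y -> D x.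

Definition sre_definable (D : seq B -> Prop) :=
  exists F : seq (seq atom), forall w, D w <-> exists2 p, p \in F & lang p w.

(* With G the letters that can always be prepended inside D, a word of D is either in G^*,
   or splits at its first letter x outside G as u x v with u in G^* and x v in D. *)
Lemma sre_definable_of_quotients (D : seq B -> Prop) : downset D ->
  (forall x, (exists w, D w /\ ~ D (x :: w)) -> sre_definable (fun w => D (x :: w))) ->
  sre_definable D.
Proof.
move=> downD quotD.
have [D0|nD0] := classic (D [::]); last first.
  by exists [::] => w; split=> [/(downD _ _ (sub0seq w))|[]].
have [G inG] := ex_finset (fun x => forall w, D w -> D (x :: w)).
have /fin_all_exists [F HF] : forall x, exists F : seq (seq atom),
    x \notin G -> forall w, D (x :: w) <-> exists2 p, p \in F & lang p w.
  move=> x; case: (boolP (x \in G)) => [_|nGx]; first by exists [::].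
  have [F HF] : sre_definable (fun w => D (x :: w)).
    apply: quotD; apply: NNPP => no_w; move/negP: nGx; apply; apply/inG => w Dw.
    by apply: NNPP => nDxw; apply: no_w; exists w.
  by exists F.
have prepend u v : all (mem G) u -> D v -> D (u ++ v).
  by elim: u => //= x u IH /andP [/inG Gx Gu] Dv; apply/Gx/IH.
exists ([:: inl G] :: [seq inl G :: inr x :: p | x <- enum (~: G), p <- F x]) => w.
split=> [Dw|[p]]; last first.
  rewrite inE => /predU1P [-> /= [u [_ [-> Gu ->]]]|]; first exact: prepend.
  case/allpairsPdep=> x [p' [+ p'F ->]] [u [_ [-> Gu [y [v [-> y_x Lv]]]]]].
  rewrite mem_enum inE => nGx; apply: prepend => //.
  by apply: downD (cat_subseq y_x (subseq_refl v)) _; apply/(HF x nGx); exists p'.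
case: (boolP (has (predC (mem G)) w)) => [hasG|]; last first.
  rewrite has_predC negbK => Gw; exists [:: inl G]; first exact: mem_head.
  by exists w, [::]; rewrite cats0.
have [x0 _ _] := hasP hasG.
case: (split_find_nth x0 hasG) Dw => x u v /= nGx; rewrite has_predC negbK cat_rcons => Gu Dw.
have /(HF x nGx) [p pF Lp] : D (x :: v) by apply: downD Dw; apply: suffix_subseq.
exists (inl G :: inr x :: p).
  by rewrite inE; apply/orP; right; apply/allpairsPdep; exists x, p; rewrite mem_enum inE.
by exists u, (x :: v); split=> //; exists [:: x], v; rewrite /= eqxx.
Qed.

(* A non-definable downset would have a non-definable proper quotient by some letter; iterating
   gives a strictly decreasing chain of downsets, which Higman's lemma forbids. *)
Theorem downset_sre_definable (D : seq B -> Prop) : downset D -> sre_definable D.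
Proof.
move=> downD; apply: NNPP => nD.
pose non_definable := {E : seq B -> Prop | downset E /\ ~ sre_definable E}.
have /ClassicalEpsilon.choice [next Hnext] : forall E : non_definable, exists E' : non_definable,
    (forall w, sval E' w -> sval E w) /\ exists w, sval E w /\ ~ sval E' w.
  move=> [E [downE nE]] /=.
  have [x [nEx [w [Ew nEw]]]] : exists x, ~ sre_definable (fun w => E (x :: w)) /\
      exists w, E w /\ ~ E (x :: w).
    apply: NNPP => no_x; apply/nE/sre_definable_of_quotients => // x Ex.
    by apply: NNPP => nEx; apply: no_x; exists x.
  have downEx : downset (fun w => E (x :: w)) by move=> u v uv; apply: downE; rewrite /= eqxx.
  exists (exist _ (fun w => E (x :: w)) (conj downEx nEx)); split=> [v /=|]; last by exists w.
  by apply: downE; apply: subseq_cons.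
pose Es n := sval (iter n next (exist _ D (conj downD nD) : non_definable)).
apply: (@almost_full_no_strict_descent _ _ Es (@almost_full_subseq B)).
- by move=> n; apply: (proj1 (proj2_sig (iter n next _))).
- by move=> n; apply: (proj1 (Hnext _)).
- by move=> n; apply: (proj2 (Hnext _)).
Qed.

End SimpleRegularExpressions.

Section Upsets.
Variable A : finType.
Local Notation B := (A * bool)%type.

Definition phi_shadow (U : seq A -> Prop) (X : {set A}) (w : seq B) : Prop :=
  exists u, [/\ ~ U u, S u = X & subseq w (phi u)].

Lemma downset_phi_shadow U X : downset (phi_shadow U X).
Proof. by move=> x y xy [u [nU Su yu]]; exists u; split=> //; apply: subseq_trans xy yu. Qed.

Lemma upset_complement_sre (U : seq A -> Prop) : upward_closed (@leE A) U ->
  exists G : seq ({set A} * seq (atom B)),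
    forall u, ~ U u <-> exists2 q, q \in G & q.1 = S u /\ lang q.2 (phi u).
Proof.
move=> upU.
have /fin_all_exists [F HF] : forall X : {set A}, exists F : seq (seq (atom B)),
    forall w, phi_shadow U X w <-> exists2 p, p \in F & lang p w.
  by move=> X; apply/downset_sre_definable/downset_phi_shadow.
exists [seq (X, p) | X <- enum {set A}, p <- F X] => u; split.
  move=> nUu; have [p pF Lp] : exists2 p, p \in F (S u) & lang p (phi u).
    by apply/HF; exists u; split=> //; apply: subseq_refl.
  by exists (S u, p) => //; apply/allpairsPdep; exists (S u), p; rewrite mem_enum.
case=> _ /allpairsPdep [X [p [_ pF ->]]] /= [eX Lp] Uu.
have [u' [nUu' Su' sub]] := (HF X (phi u)).2 (ex_intro2 _ _ p pF Lp).
by apply/nUu'/(upU u) => //; split; [apply/embP | rewrite Su'].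
Qed.

Lemma almost_full_upsets : almost_full (fun U V : upsets (@leE A) => incl V U).
Proof.
move=> Us.
have /ClassicalEpsilon.choice [G HG] := fun n => upset_complement_sre (proj2_sig (Us n)).
pose code (q : {set A} * seq (atom B)) : seq ({set A} + atom B) := inl q.1 :: map inr q.2.
have afG : almost_full (embed (fun q r => subseq (code q) (code r))).
  by apply: higman (almost_full_comap code (@almost_full_subseq _)) => r q s; apply: subseq_trans.
have [i [j [lt_ij GiGj]]] := afG G.
exists i, j; split=> // u Uju; apply: NNPP => nUiu.
have [q qGi [Sq Lq]] := (HG i u).1 nUiu.
have [r rGj /subseq_tagged [qr sub]] := embed_mem GiGj qGi.
apply: (HG j u).2 Uju; exists r => //; split; first by rewrite -qr.
exact: lang_subseq sub Lq.
Qed.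

End Upsets.

Section Inclusion.
Variables (P : Type) (le : P -> P -> Prop).

Lemma incl_refl (U : upsets le) : incl U U.
Proof. by []. Qed.

Lemma incl_trans (V U W : upsets le) : incl U V -> incl V W -> incl U W.
Proof. by move=> UV VW x /UV /VW. Qed.

Lemma incl_antisym (U V : upsets le) : incl U V -> incl V U -> U = V.
Proof.
case: U V => [U upU] [V upV] /= UV VU.
have eUV : U = V.
  apply: FunctionalExtensionality.functional_extensionality => x.
  by apply: PropExtensionality.propositional_extensionality; split; [apply: UV | apply: VU].
by subst V; congr exist; apply: ProofIrrelevance.proof_irrelevance.
Qed.

End Inclusion.

Section AlmostFullOrders.
Variables (P : Type) (le : P -> P -> Prop).

Lemma almost_full_no_antichain : almost_full le -> ~ exists a, antichain le a.
Proof.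
by move=> afle [a anti_a]; have [i [j [+ /anti_a eq_ij]]] := afle a; rewrite eq_ij ltnn.
Qed.

Lemma almost_full_dual_no_antichain :
  almost_full (fun x y => le y x) -> ~ exists a, antichain le a.
Proof.
by move=> afle [a anti_a]; have [i [j [+ /anti_a eq_ji]]] := afle a; rewrite eq_ji ltnn.
Qed.

End AlmostFullOrders.

Lemma almost_full_no_descending_chain (P : Type) (le : P -> P -> Prop) :
  (forall x, le x x) -> (forall y x z, le x y -> le y z -> le x z) ->
  (forall x y, le x y -> le y x -> x = y) ->
  almost_full le -> ~ exists a, descending_chain le a.
Proof.
move=> le_refl le_trans le_anti afle [a desc_a].
have [i [j [lt_ij le_ij]]] := afle a.
have le_ji : le (a j) (a i.+1) := homo_leq (r := fun x y => le y x) le_refl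
  (fun y x z xy yz => le_trans _ _ _ yz xy) (fun n => proj1 (desc_a n)) lt_ij.
exact: (proj2 (desc_a i)) (le_anti _ _ (proj1 (desc_a i)) (le_trans _ _ _ le_ij le_ji)).
Qed.

Lemma almost_full_dual_no_ascending_chain (P : Type) (le : P -> P -> Prop) :
  (forall x, le x x) -> (forall y x z, le x y -> le y z -> le x z) ->
  (forall x y, le x y -> le y x -> x = y) ->
  almost_full (fun x y => le y x) -> ~ exists a, ascending_chain le a.
Proof.
move=> le_refl le_trans le_anti afle [a asc_a].
apply: (almost_full_no_descending_chain (le := fun x y => le y x)) afle _ => //.
- by move=> y x z xy yz; apply: le_trans yz xy.
- by move=> x y xy yx; apply: le_anti.
- by exists a => i; have [le_i ne_i] := asc_a i; split=> // /esym.
Qed.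

Theorem theorem1p3 (A : finType) :
  ((~ exists a : nat -> seq A, descending_chain (@leE A) a) /\
   (~ exists a : nat -> seq A, antichain (@leE A) a)) /\
  ((~ exists U : nat -> upsets (@leE A), ascending_chain (@incl _ (@leE A)) U) /\
   (~ exists U : nat -> upsets (@leE A), antichain (@incl _ (@leE A)) U)).
Proof.
split; split.
- exact: almost_full_no_descending_chain (@leE_refl A) (@leE_trans A) (@leE_antisym A)
    (@almost_full_leE A).
- exact: almost_full_no_antichain (@almost_full_leE A).
- exact: almost_full_dual_no_ascending_chain (@incl_refl _ _) (@incl_trans _ _)
    (@incl_antisym _ _) (@almost_full_upsets A).
- exact: almost_full_dual_no_antichain (@almost_full_upsets A).
Qed.
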